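(* Let $n\ge2$, let $\sigma,\tau\in S_n$, and let $u,v,w\in\{1,\dots,n\}$. Then: 1. $M(\sigma,u,0)M(\tau,v,0)=M(\tau\sigma,w,0)$. 2. $M(\sigma,u,1)M(\tau,v,0)=M(\tau\sigma,u,1)$. 3. $M(\sigma,u,0)M(\tau,v,1)=M(\tau\sigma,\sigma^{-1}(v),1)$. 4. If $\sigma^{-1}(v)=u$, then $M(\sigma,u,1)M(\tau,v,1)=M(\tau\sigma,w,0)$. 5. If $\sigma^{-1}(v)\ne u$, then $M(\sigma,u,1)M(\tau,v,1)=M(\eta,\sigma^{-1}(v),1)$, where $\eta\in S_n$ is defined by $$\eta(j)=\begin{cases}\tau\sigma(j),& j\notin\{u,\sigma^{-1}(v)\},\\ \tau\sigma(u),& j=\sigma^{-1}(v),\\ \tau(v),& j=u.\end{cases}$$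
   Context: - $e_j$ is the $j$-th standard basis column vector of $\mathbb{Z}^n$. - $r_h$ is the row vector $\big((-1)^h,(-1)^{h+1},\dots,(-1)^{h+n-1}\big)$, whose $k$-th entry is $(-1)^{h+k-1}$. - Permutations are composed as functions: $(\tau\sigma)(j)=\tau(\sigma(j))$. - For $\sigma\in S_n$, $h\in\{1,\dots,n\}$ and $\epsilon\in\{0,1\}$, $M(\sigma,h,\epsilon)$ is the $n\times n$ matrix $$M(\sigma,h,\epsilon)=\sum_{j=1}^n(-1)^{j+\sigma(j)}e_je_{\sigma(j)}^T+\epsilon\Big((-1)^{h+\sigma(h)+1}e_he_{\sigma(h)}^T+e_hr_h\Big).$$ - Thus $M(\sigma,h,0)$ is the signed permutation matrix with entry $(-1)^{j+\sigma(j)}$ at position $(j,\sigma(j))$ and zeros elsewhere; it does not depend on $h$. - $M(\sigma,h,1)$ is obtained from $M(\sigma,h,0)$ by replacing its $h$-th row with $r_h$. *)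

From HB Require Import structures.
From mathcomp Require Import all_boot all_order all_fingroup all_algebra.
Set Implicit Arguments. Unset Strict Implicit. Unset Printing Implicit Defensive.
Import GRing.Theory.
Local Open Scope ring_scope.

(* Indices are 0-based ordinals 'I_n; index j here corresponds to j+1 in the
   paper.  Parities of i+j (and h+k-1 vs h'+k'+1) are invariant under this shift. *)

Definition evec (n : nat) (j : 'I_n) : 'cV[int]_n := \col_(i < n) (i == j)%:R.

Definition rvec (n : nat) (h : 'I_n) : 'rV[int]_n :=
  \row_(k < n) (-1) ^+ (h + k + 1)%N.

Definition Mmat (n : nat) (s : 'S_n) (h : 'I_n) (eps : bool) : 'M[int]_n :=
  \sum_(j < n) (-1) ^+ (j + s j)%N *: (evec j *m (evec (s j))^T)
  + (eps%:R : int) *: ((-1) ^+ (h + s h + 1)%N *: (evec h *m (evec (s h))^T)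
                       + evec h *m rvec h).

(* Composition as functions: (tau o sigma)(j) = tau (sigma j).
   In mathcomp, (sigma * tau)%g j = tau (sigma j) (lemma permM). *)
Definition comp_perm (n : nat) (tau sigma : 'S_n) : 'S_n := (sigma * tau)%g.

From mathcomp Require Import all_boot all_fingroup all_algebra.
Set Implicit Arguments.
Import GRing.Theory.
Local Open Scope ring_scope.

(* Row i of M(s,h,0) is (-1)^(i + s i) e_(s i)^T, and M(s,h,1) has row h
   replaced by r_h, so a product M(s,h,e) B is computed row by row from rows of
   B and from r_h B.  Two identities drive all five cases: r_h is fixed by every
   signed permutation matrix, since the signs (-1)^(j + t j) telescope against
   those of r_h; and r_h M(t,v,1) = (-1)^(h + t v) e_(t v)^T, because the
   coefficient r_h(v) of the replaced row turns r_v into -r_h, which cancels the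
   rest of r_h. *)

Lemma signr_cancel (R : pzRingType) (a b c : nat) :
  (-1) ^+ (a + b) * (-1) ^+ (b + c) = (-1) ^+ (a + c) :> R.
Proof. by rewrite !exprD -mulrA signrMK. Qed.

Lemma evec_delta n (j : 'I_n) : evec j = delta_mx j 0.
Proof. by apply/matrixP => i k; rewrite !mxE ord1 eqxx andbT. Qed.

Lemma row_Mmat n (s : 'S_n) h (e : bool) i :
  row i (Mmat s h e)
  = if e && (i == h) then rvec h else (-1) ^+ (i + s i) *: 'e_(s i).
Proof.
rewrite /Mmat; under eq_bigr do rewrite !evec_delta trmx_delta mul_delta_mx.
rewrite !evec_delta trmx_delta mul_delta_mx.
apply/rowP => k; rewrite !mxE summxE (bigD1 i) //= big1 => [|j /negbTE ji]; last first.
  by rewrite !mxE eq_sym ji mulr0.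
rewrite big_ord1 !mxE !eqxx addr0 andbT.
case: e; case: (eqVneq i h) => [->|_] /=;
  rewrite !mxE /= ?mul0r ?mul1r ?mulr0 ?addr0 ?eqxx ?(eq_sym k) //.
by rewrite addn1 exprS mulN1r mulNr addNKr.
Qed.

Lemma row_Mmat_mul n (s : 'S_n) h (e : bool) (B : 'M[int]_n) i :
  row i (Mmat s h e *m B)
  = if e && (i == h) then rvec h *m B else (-1) ^+ (i + s i) *: row (s i) B.
Proof. by rewrite row_mul row_Mmat; case: ifP => // _; rewrite -scalemxAl -rowE. Qed.

Lemma scale_sign_rvec n (h k : 'I_n) : (-1) ^+ (h + k) *: rvec k = rvec h.
Proof. by apply/rowP => j; rewrite !mxE -addnA signr_cancel addnA. Qed.

Lemma rvec_mul_Mmat0 n (h : 'I_n) (t : 'S_n) v : rvec h *m Mmat t v false = rvec h.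
Proof.
rewrite mulmx_sum_row [RHS]row_sum_delta [RHS](reindex_inj (@perm_inj _ t)).
apply: eq_bigr => j _; rewrite row_Mmat scalerA !mxE.
by rewrite addnAC signr_cancel addnAC.
Qed.

Lemma rvec_mul_Mmat1 n (h : 'I_n) (t : 'S_n) v :
  rvec h *m Mmat t v true = (-1) ^+ (h + t v) *: 'e_(t v).
Proof.
pose S : 'rV[int]_n :=
  \sum_(j < n | j != v) rvec h 0 j *: ((-1) ^+ (j + t j) *: 'e_(t j)).
have rowsE (e : bool) : \sum_(j < n | j != v) rvec h 0 j *: row j (Mmat t v e) = S.
  by apply: eq_bigr => j /negbTE jv; rewrite row_Mmat jv andbF.
have : rvec h 0 v *: ((-1) ^+ (v + t v) *: 'e_(t v)) + S = rvec h.
  by rewrite -[RHS](rvec_mul_Mmat0 h t v) mulmx_sum_row (bigD1 v) //= rowsE row_Mmat.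
move/(canRL (addKr _)) => SE.
rewrite mulmx_sum_row (bigD1 v) //= rowsE row_Mmat eqxx SE mxE /=.
rewrite addn1 exprS mulN1r !scaleNr scale_sign_rvec opprK addrC addrK.
by rewrite scalerA signr_cancel.
Qed.

Theorem mainTheorem11 (n : nat) (Hn : (2 <= n)%N) (sigma tau : 'S_n) (u v w : 'I_n) :
  [/\ Mmat sigma u false *m Mmat tau v false = Mmat (comp_perm tau sigma) w false,
      Mmat sigma u true *m Mmat tau v false = Mmat (comp_perm tau sigma) u true,
      Mmat sigma u false *m Mmat tau v true
        = Mmat (comp_perm tau sigma) ((sigma^-1)%g v) true,
      ((sigma^-1)%g v = u ->
         Mmat sigma u true *m Mmat tau v true = Mmat (comp_perm tau sigma) w false)
    & ((sigma^-1)%g v <> u ->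
         forall eta : 'S_n,
           (forall j : 'I_n,
              eta j = (if j == u then tau v
                       else if j == (sigma^-1)%g v then comp_perm tau sigma u
                       else comp_perm tau sigma j)) ->
           Mmat sigma u true *m Mmat tau v true = Mmat eta ((sigma^-1)%g v) true)].
Proof.
have [x ->] : exists x, v = sigma x by exists ((sigma^-1)%g v); rewrite permKV.
rewrite permK /comp_perm.
split=> [|||<-|xu eta etaE]; apply/row_matrixP => i;
  rewrite row_Mmat_mul !row_Mmat ?permM /=.
- by rewrite scalerA signr_cancel.
- case: eqVneq => _; first exact: rvec_mul_Mmat0.
  by rewrite scalerA signr_cancel.
- rewrite (inj_eq perm_inj); case: eqVneq => [->|_]; first exact: scale_sign_rvec.
  by rewrite scalerA signr_cancel.
- rewrite (inj_eq perm_inj); case: eqVneq => [->|_]; first exact: rvec_mul_Mmat1.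
  by rewrite scalerA signr_cancel.
- have ux : (u == x) = false by apply/eqP; exact: nesym.
  rewrite (inj_eq perm_inj) etaE; case: (eqVneq i u) => [->|_].
    by rewrite rvec_mul_Mmat1 ux.
  case: eqVneq => [->|_]; first exact: scale_sign_rvec.
  by rewrite permM scalerA signr_cancel.
Qed.
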